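(* Let $\mathfrak g$, $\{e_i\}$, $\{e^i\}$, $H=U(\mathfrak g\ltimes\mathfrak g^* )$, $Q_1,Q_2$, $:\!Q_1Q_2\!:$, $:\!Q_1Q_2\!:^R$, $\kappa_{ij}$ and $F^{-1}$ (for any $\alpha,\beta$ with $\alpha-\beta=-\frac12$) be as in the context. Let $F^{-1}_{\rm red}\in S(\mathfrak g^* )\otimes S(\mathfrak g^* )[[\hbar]]$ be obtained from $F^{-1}$ by rewriting each tensor factor, using the relations of $H$, as a sum of monomials with all elements of $\mathfrak g^*$ to the left of all elements of $\mathfrak g$, and then discarding all monomials containing an element of $\mathfrak g$. Let $\mathrm{Tr}_{2k}\in S(\mathfrak g^* )$ be the polynomial function $v\mapsto\mathrm{tr}\big(({\rm ad}_v)^{2k}\big)$ on $\mathfrak g$, let $\alpha_{2k}$ be defined by $\sum_{k\ge1}\alpha_{2k}t^{2k}=\frac12\ln\big(\frac{\sinh(t/2)}{t/2}\big)$, and $\gamma=\exp\big(\sum_{k\ge1}\alpha_{2k}\hbar^{2k}\mathrm{Tr}_{2k}\big)$. Then $$F^{-1}_{\rm red}=(\Delta\gamma)(\gamma^{-1}\otimes\gamma^{-1})+O(\hbar^3),$$ where $\Delta$ is the coproduct of $U(\mathfrak g^* )=S(\mathfrak g^* )$ with $\mathfrak g^*$ primitive.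
   Context: $\mathfrak g$ is a finite-dimensional Lie algebra with basis $\{e_i\}$, dual basis $\{e^i\}$; $\mathfrak g\ltimes\mathfrak g^*$ has $\mathfrak g^*$ as abelian ideal and $[x,\phi]=-\phi\circ{\rm ad}_x$; $H=U(\mathfrak g\ltimes\mathfrak g^* )$. $Q_1=e_i\otimes e^i$, $Q_2=e^i\otimes e_i$, $:\!Q_1Q_2\!:\,=e_ie^j\otimes e_je^i$, $:\!Q_1Q_2\!:^R=e^je_i\otimes e^ie_j$, $\kappa_{ij}=-\mathrm{tr}({\rm ad}_{e_i}{\rm ad}_{e_j})$ (sums over repeated indices), and $F^{-1}=1\otimes1+\hbar(\alpha Q_1+\beta Q_2)+\hbar^2\big(\frac{\alpha^2}{2}(Q_1+Q_2)Q_1+\frac{\beta^2}{2}(Q_1+Q_2)Q_2-\frac1{24}(:\!Q_1Q_2\!:+2:\!Q_1Q_2\!:^R+2\kappa_{ij}e^i\otimes e^j)\big)+O(\hbar^3)$. *)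

From HB Require Import structures.
From mathcomp Require Import all_boot all_order all_algebra.
From mathcomp Require Import mpoly.
Set Implicit Arguments. Unset Strict Implicit. Unset Printing Implicit Defensive.
Import Order.TTheory GRing.Theory.
Local Open Scope ring_scope.

(* The Lie algebra g has basis e_0..e_{n-1} and structure constants c:
   [e_i, e_j] = \sum_k c i j k e_k.                                        *)
Definition is_lie_bracket (R : pzRingType) (n : nat) (c : 'I_n -> 'I_n -> 'I_n -> R) :=
  (forall i j k, c i j k = - c j i k) /\ (forall i, forall k, c i i k = 0) /\
  (forall i j k l, \sum_(m < n) (c j k m * c i m l + c k i m * c j m l
                                 + c i j m * c k m l) = 0).

Section Defs.
Variables (R : fieldType) (n : nat) (c : 'I_n -> 'I_n -> 'I_n -> R).

(* Letters of the tensor algebra of g (+) gdual : inl i = e_i, inr i = e^i. *)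
Definition letter := ('I_n + 'I_n)%type.
Definition word := seq letter.

(* S(gdual) = polynomial functions on g = {mpoly R[n]}, e^i |-> 'X_i.
   Commutator in g |x gdual : [e_i, e^j] = - e^j o ad_{e_i}
                                   = - \sum_l c i l j e^l.               *)
Definition brack_dual (i j : 'I_n) : {mpoly R[n]} :=
  - \sum_(l < n) c i l j *: 'X_l.

(* Moving e_i to the right through a monomial e^{j1}...e^{jm} of S(gdual):
   e_i P = P e_i + sum of the commutator terms, i.e. the commutator terms
   form the derivation of S(gdual) extending e^j |-> [e_i, e^j].          *)
Definition ad_der (i : 'I_n) (p : {mpoly R[n]}) : {mpoly R[n]} :=
  \sum_(j < n) mderiv j p * brack_dual i j.

(* Normal ordering (gdual left of g) followed by discarding every monomial
   containing an element of g.  Processing the word from the right, a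
   monomial whose g-part is nonempty stays so after left multiplication by
   any letter, so such monomials may be discarded as soon as they arise;
   the surviving (pure S(gdual)) part evolves as below.                    *)
Fixpoint red (w : word) : {mpoly R[n]} :=
  match w with
  | [::] => 1
  | inr j :: w' => 'X_j * red w'
  | inl i :: w' => ad_der i (red w')
  end.

(* S(gdual) (x) S(gdual) = {mpoly R[n + n]}; the two tensor embeddings. *)
Definition emb1 (p : {mpoly R[n]}) : {mpoly R[n + n]} :=
  p \mPo [tuple ('X_(lshift n i) : {mpoly R[n + n]}) | i < n].
Definition emb2 (p : {mpoly R[n]}) : {mpoly R[n + n]} :=
  p \mPo [tuple ('X_(rshift n i) : {mpoly R[n + n]}) | i < n].
Definition coprod (p : {mpoly R[n]}) : {mpoly R[n + n]} :=
  p \mPo [tuple ('X_(lshift n i) + 'X_(rshift n i) : {mpoly R[n + n]}) | i < n].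

(* Formal elements of T(g+gdual) (x) T(g+gdual): finite linear combinations of
   pairs of words; they map onto H (x) H. *)
Definition T2 := seq (R * (word * word)).
Definition T2one : T2 := [:: (1, ([::], [::]))].
Definition T2add (a b : T2) : T2 := a ++ b.
Definition T2scale (r : R) (a : T2) : T2 := [seq (r * x.1, x.2) | x <- a].
Definition T2mul (a b : T2) : T2 :=
  [seq (x.1 * y.1, (x.2.1 ++ y.2.1, x.2.2 ++ y.2.2)) | x <- a, y <- b].
Definition T2sum (I : finType) (f : I -> T2) : T2 := flatten [seq f i | i <- enum I].
Definition T2pure (r : R) (u v : word) : T2 := [:: (r, (u, v))].

Definition red2 (a : T2) : {mpoly R[n + n]} :=
  \sum_(x <- a) x.1 *: (emb1 (red x.2.1) * emb2 (red x.2.2)).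

Definition Q1 : T2 := T2sum (fun i : 'I_n => T2pure 1 [:: inl i] [:: inr i]).
Definition Q2 : T2 := T2sum (fun i : 'I_n => T2pure 1 [:: inr i] [:: inl i]).
Definition Q1Q2n : T2 := T2sum (fun ij : 'I_n * 'I_n =>
  T2pure 1 [:: inl ij.1; inr ij.2] [:: inl ij.2; inr ij.1]).
Definition Q1Q2R : T2 := T2sum (fun ij : 'I_n * 'I_n =>
  T2pure 1 [:: inr ij.2; inl ij.1] [:: inr ij.1; inl ij.2]).

(* ad_{e_i} has matrix entries (ad_{e_i})_{k l} = c i l k;
   kappa_{ij} = - tr(ad_{e_i} ad_{e_j}). *)
Definition adm (i : 'I_n) : 'M[R]_n := \matrix_(k < n, l < n) c i l k.
Definition kappa (i j : 'I_n) : R := - \tr (adm i *m adm j).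
Definition Kterm : T2 := T2sum (fun ij : 'I_n * 'I_n =>
  T2pure (kappa ij.1 ij.2) [:: inr ij.1] [:: inr ij.2]).

(* Coefficients of hbar^0, hbar^1, hbar^2 of F^{-1} *)
Definition Finv0 : T2 := T2one.
Definition Finv1 (a b : R) : T2 := T2add (T2scale a Q1) (T2scale b Q2).
Definition Finv2 (a b : R) : T2 :=
  T2add (T2scale (a ^+ 2 / 2%:R) (T2mul (T2add Q1 Q2) Q1))
  (T2add (T2scale (b ^+ 2 / 2%:R) (T2mul (T2add Q1 Q2) Q2))
    (T2scale (- (24%:R)^-1)
       (T2add Q1Q2n (T2add (T2scale 2%:R Q1Q2R) (T2scale 2%:R Kterm))))).
Definition Finv_coef (a b : R) (k : nat) : T2 :=
  match k with 0 => Finv0 | 1 => Finv1 a b | 2 => Finv2 a b | _ => [::] end.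

(* Tr_{2k}(v) = tr((ad_v)^{2k}), with ad_v = \sum_i v_i ad_{e_i}:
   (ad_v)_{k l} = \sum_i c i l k X_i. *)
Definition adv : 'M[{mpoly R[n]}]_n :=
  \matrix_(k < n, l < n) \sum_(i < n) c i l k *: 'X_i.
Definition Tr (k : nat) : {mpoly R[n]} := \tr (adv ^+ (2 * k)).

(* alpha_{2k}: coefficient of t^{2k} in (1/2) ln(sinh(t/2)/(t/2)), computed
   as a formal power series: sinh(t/2)/(t/2) = 1 + u,
   u = \sum_{j>=1} t^{2j} / (4^j (2j+1)!), and ln(1+u) = \sum_{m>=1}
   (-1)^{m+1} u^m / m; terms with j > k or m > k do not contribute. *)
Definition useries (k : nat) : {poly R} :=
  \sum_(1 <= j < k.+1) ((4 ^ j * (2 * j).+1`!)%:R)^-1 *: 'X^(2 * j).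
Definition alpha (k : nat) : R :=
  2%:R^-1 * (\sum_(1 <= m < k.+1)
     ((-1) ^+ m.+1 / m%:R) * ((useries k) ^+ m)`_(2 * k)).

(* exponent of gamma truncated modulo hbar^N, as a polynomial in hbar *)
Definition gexp (N : nat) : {poly {mpoly R[n]}} :=
  \sum_(1 <= k < N) (alpha k *: Tr k)%:P * 'X^(2 * k).
(* exp truncated modulo hbar^N (X has no hbar^0 term) *)
Definition texp (N : nat) (X : {poly {mpoly R[n]}}) : {poly {mpoly R[n]}} :=
  \sum_(m < N) (m`!%:R)^-1 *: X ^+ m.
Definition gamma (N : nat) := texp N (gexp N).
Definition gamma_inv (N : nat) := texp N (- gexp N).

Definition rhs (N : nat) : {poly {mpoly R[n + n]}} :=
  map_poly coprod (gamma N) * map_poly emb1 (gamma_inv N)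
    * map_poly emb2 (gamma_inv N).

End Defs.

From HB Require Import structures.
From mathcomp Require Import all_boot all_order all_algebra.
From mathcomp Require Import mpoly.
From mathcomp Require Import ring.
Set Implicit Arguments. Unset Strict Implicit. Unset Printing Implicit Defensive.
Import GRing.Theory.
Local Open Scope ring_scope.

(* Reduction moves letters of g to the right, and a word ending in a letter
   of g reduces to 0.  Up to order 2 in hbar this kills every term of F^-1
   except 1 (x) 1, :Q1Q2: and the kappa-term, so F^-1_red is independent of
   alpha and beta there.  By antisymmetry of the bracket, :Q1Q2: reduces to
   the cross form B(v (x) 1, 1 (x) v) of the trace form B(x, y) =
   tr(ad_x ad_y), and the kappa-term to its negative, giving (1/24) B.  On
   the other side gamma = 1 + alpha_2 hbar^2 Tr_2 + O(hbar^4) with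
   alpha_2 = 1/48, and Tr_2 is the quadratic form of B, whose polarization
   Delta Tr_2 - Tr_2 (x) 1 - 1 (x) Tr_2 is 2 B(v (x) 1, 1 (x) v). *)

Section BilinearSums.
Variables (K : pzRingType) (A : algType K) (I J : finType).

Lemma mulr_sumZ (f : I -> K) (g : J -> K) (x : I -> A) (y : J -> A) :
  (\sum_i f i *: x i) * (\sum_j g j *: y j) =
  \sum_i \sum_j (f i * g j) *: (x i * y j).
Proof.
rewrite mulr_suml; apply: eq_bigr => i _; rewrite mulr_sumr.
by apply: eq_bigr => j _; rewrite -scalerAl -scalerAr scalerA.
Qed.

Lemma exchange_big_scale (I' : finType) (F : I' -> I -> J -> K) (z : I -> J -> A) :
  \sum_a \sum_i \sum_j F a i j *: z i j = \sum_i \sum_j (\sum_a F a i j) *: z i j.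
Proof.
rewrite exchange_big; apply: eq_bigr => i _; rewrite exchange_big.
by apply: eq_bigr => j _; rewrite scaler_suml.
Qed.

End BilinearSums.

HB.instance Definition _ (R : fieldType) (n : nat) :=
  GRing.LRMorphism.copy (@emb1 R n)
    (comp_mpoly [tuple ('X_(lshift n i) : {mpoly R[n + n]}) | i < n]).
HB.instance Definition _ (R : fieldType) (n : nat) :=
  GRing.LRMorphism.copy (@emb2 R n)
    (comp_mpoly [tuple ('X_(rshift n i) : {mpoly R[n + n]}) | i < n]).
HB.instance Definition _ (R : fieldType) (n : nat) :=
  GRing.LRMorphism.copy (@coprod R n)
    (comp_mpoly [tuple ('X_(lshift n i) + 'X_(rshift n i) : {mpoly R[n + n]}) | i < n]).

Section TensorEmbeddings.
Variables (R : fieldType) (n : nat).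

Lemma emb1X i : emb1 ('X_i : {mpoly R[n]}) = 'X_(lshift n i).
Proof. by rewrite /emb1 comp_mpolyXU -tnth_nth tnth_mktuple. Qed.

Lemma emb2X i : emb2 ('X_i : {mpoly R[n]}) = 'X_(rshift n i).
Proof. by rewrite /emb2 comp_mpolyXU -tnth_nth tnth_mktuple. Qed.

Lemma coprodX i : coprod ('X_i : {mpoly R[n]}) = 'X_(lshift n i) + 'X_(rshift n i).
Proof. by rewrite /coprod comp_mpolyXU -tnth_nth tnth_mktuple. Qed.

Definition quad_form (B : 'I_n -> 'I_n -> R) : {mpoly R[n]} :=
  \sum_l \sum_m B l m *: ('X_l * 'X_m).

Definition cross_form (B : 'I_n -> 'I_n -> R) : {mpoly R[n + n]} :=
  \sum_l \sum_m B l m *: ('X_(lshift n l) * 'X_(rshift n m)).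

Lemma coprod_quad_form B :
  coprod (quad_form B) - emb1 (quad_form B) - emb2 (quad_form B)
  = cross_form (fun l m => B l m + B m l).
Proof.
have split_term l m : coprod (B l m *: ('X_l * 'X_m))
    - emb1 (B l m *: ('X_l * 'X_m)) - emb2 (B l m *: ('X_l * 'X_m))
  = B l m *: ('X_(lshift n l) * 'X_(rshift n m))
    + B l m *: ('X_(lshift n m) * 'X_(rshift n l)).
  rewrite !linearZ /= !rmorphM /= coprodX coprodX !emb1X !emb2X -!scalerDr.
  by congr (_ *: _); ring.
pose delta p := coprod p - emb1 p - emb2 p :> {mpoly R[n + n]}.
have delta_sum (F : 'I_n -> {mpoly R[n]}) : delta (\sum_i F i) = \sum_i delta (F i).
  rewrite /delta (raddf_sum (@coprod R n)) (raddf_sum (@emb1 R n)).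
  by rewrite (raddf_sum (@emb2 R n)) -!sumrB.
rewrite -/(delta _) /quad_form delta_sum.
under eq_bigr => l _ do rewrite delta_sum.
under eq_bigr => l _ do under eq_bigr => m _ do rewrite /delta split_term.
under eq_bigr => l _ do rewrite big_split /=.
rewrite big_split /= /cross_form.
under [in RHS]eq_bigr => l _ do under eq_bigr => m _ do rewrite scalerDl.
under [in RHS]eq_bigr => l _ do rewrite big_split /=.
by rewrite [in RHS]big_split /= [in X in _ + X = _]exchange_big.
Qed.
End TensorEmbeddings.

Section Reduction.
Variables (R : fieldType) (n : nat) (c : 'I_n -> 'I_n -> 'I_n -> R).

Lemma mderivXU (i j : 'I_n) : mderiv j ('X_i : {mpoly R[n]}) = (i == j)%:R.
Proof.
rewrite mderivX mnm1E; case: eqP => [->|_]; last by rewrite scale0r.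
have -> : (U_(j) - U_(j))%MM = 0%MM by apply/mnmP=> k; rewrite !mnmE subnn.
by rewrite mpolyX0 scale1r.
Qed.

Lemma ad_der0 i : ad_der c i 0 = 0.
Proof. by rewrite /ad_der big1 // => j _; rewrite mderiv0 mul0r. Qed.

Lemma ad_der1 i : ad_der c i 1 = 0.
Proof. by rewrite /ad_der big1 // => j _; rewrite -mpolyC1 mderivC mul0r. Qed.

Lemma ad_derX i j : ad_der c i 'X_j = brack_dual c i j.
Proof.
rewrite /ad_der (bigD1 j) //= big1 ?addr0 => [|k /negbTE k_neq_j].
  by rewrite mderivXU eqxx mul1r.
by rewrite mderivXU eq_sym k_neq_j mul0r.
Qed.

Lemma red_cat_eq0 u v : red c v = 0 -> red c (u ++ v) = 0.
Proof.
by move=> red_v; elim: u => [|[i|j] u /= ->]; rewrite ?ad_der0 ?mulr0.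
Qed.

Lemma red2_add a b : red2 c (T2add a b) = red2 c a + red2 c b.
Proof. exact: big_cat. Qed.

Lemma red2_scale r a : red2 c (T2scale r a) = r *: red2 c a.
Proof.
by rewrite /red2 big_map scaler_sumr; apply: eq_bigr => x _; rewrite scalerA.
Qed.

Lemma red2_sum (I : finType) (f : I -> T2 R n) :
  red2 c (T2sum f) = \sum_i red2 c (f i).
Proof. by rewrite /red2 /T2sum big_flatten /= big_map -big_enum. Qed.

Lemma red2_pure r u v :
  red2 c (T2pure r u v) = r *: (emb1 (red c u) * emb2 (red c v)).
Proof. exact: big_seq1. Qed.

Lemma red2_one : red2 c (T2one R n) = 1.
Proof. by rewrite /red2 big_seq1 scale1r /= !rmorph1 mulr1. Qed.

Definition red_vanishes (x : R * (word n * word n)) :=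
  (red c x.2.1 == 0) || (red c x.2.2 == 0).

Lemma red2_eq0 a : all red_vanishes a -> red2 c a = 0.
Proof.
move=> /allP a_vanishes; apply: big1_seq => x /andP[_ /a_vanishes].
by case/orP => /eqP ->; rewrite ?rmorph0 ?mul0r ?mulr0 scaler0.
Qed.

Lemma all_vanishes_add a b :
  all red_vanishes a -> all red_vanishes b -> all red_vanishes (T2add a b).
Proof. by rewrite /T2add all_cat => -> ->. Qed.

Lemma all_vanishes_scale r a :
  all red_vanishes a -> all red_vanishes (T2scale r a).
Proof. by rewrite all_map; apply: sub_all. Qed.

Lemma all_vanishes_sum (I : finType) (f : I -> T2 R n) :
  (forall i, all red_vanishes (f i)) -> all red_vanishes (T2sum f).
Proof.
by move=> f_vanishes; apply/allP => x /flatten_mapP[i _]; apply/allP.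
Qed.

Lemma all_vanishes_mulr a b :
  all red_vanishes b -> all red_vanishes (T2mul a b).
Proof.
move=> /allP b_vanishes; apply/allP => _ /allpairsP[[x y] [_ /= y_in_b ->]].
rewrite /red_vanishes /=.
by case/orP: (b_vanishes y y_in_b) => /eqP red_y;
  rewrite (red_cat_eq0 _ red_y) eqxx ?orbT.
Qed.

Lemma all_vanishes_Q1 : all red_vanishes (Q1 R n).
Proof. by apply: all_vanishes_sum => i; rewrite /= /red_vanishes /= ad_der1 eqxx. Qed.

Lemma all_vanishes_Q2 : all red_vanishes (Q2 R n).
Proof.
by apply: all_vanishes_sum => i; rewrite /= /red_vanishes /= ad_der1 eqxx orbT.
Qed.

Lemma all_vanishes_Q1Q2R : all red_vanishes (Q1Q2R R n).
Proof.
by apply: all_vanishes_sum => ij; rewrite /= /red_vanishes /= ad_der1 mulr0 eqxx.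
Qed.

Lemma red2_Finv1 a b : red2 c (Finv1 n a b) = 0.
Proof.
by apply/red2_eq0/all_vanishes_add; apply/all_vanishes_scale;
  [exact: all_vanishes_Q1 | exact: all_vanishes_Q2].
Qed.

End Reduction.

Section KillingForm.
Variables (R : fieldType) (n : nat) (c : 'I_n -> 'I_n -> 'I_n -> R).

Definition killing (l m : 'I_n) : R := \tr (adm c l *m adm c m).

Lemma killingE l m : killing l m = \sum_k \sum_p c l p k * c m k p.
Proof.
by apply: eq_bigr => k _; rewrite mxE; apply: eq_bigr => p _; rewrite !mxE.
Qed.

Lemma killingC l m : killing l m = killing m l.
Proof. exact: mxtrace_mulC. Qed.

Lemma Tr1_quad_form : Tr c 1 = quad_form killing.
Proof.
rewrite /Tr muln1 expr2 -mulmxE /quad_form.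
transitivity (\sum_k \sum_p \sum_l \sum_m
  (c l p k * c m k p) *: ('X_l * 'X_m : {mpoly R[n]})).
  apply: eq_bigr => k _; rewrite mxE; apply: eq_bigr => p _.
  by rewrite !mxE mulr_sumZ.
rewrite pair_bigA exchange_big_scale; apply: eq_bigr => l _; apply: eq_bigr => m _.
by rewrite killingE pair_bigA.
Qed.

Lemma red2_Kterm : red2 c (Kterm c) = - cross_form killing.
Proof.
rewrite red2_sum /cross_form pair_bigA -sumrN; apply: eq_bigr => -[l m] _.
by rewrite red2_pure /= !mulr1 emb1X emb2X /kappa -/(killing _ _) scaleNr.
Qed.

Lemma Tr1_polarization :
  coprod (Tr c 1) - emb1 (Tr c 1) - emb2 (Tr c 1) = 2%:R *: cross_form killing.
Proof.
rewrite Tr1_quad_form coprod_quad_form /cross_form scaler_sumr.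
apply: eq_bigr => l _; rewrite scaler_sumr; apply: eq_bigr => m _.
by rewrite (killingC m l) scalerA mulr_natl mulr2n.
Qed.

Hypothesis c_anti : forall i j k, c i j k = - c j i k.

Lemma emb1_brack_dual i j :
  emb1 (brack_dual c i j) = \sum_l c l i j *: 'X_(lshift n l).
Proof.
rewrite /brack_dual (raddfN (@emb1 R n)) (raddf_sum (@emb1 R n)) -sumrN /=.
apply: eq_bigr => l _; by rewrite linearZ /= emb1X c_anti scaleNr opprK.
Qed.

Lemma emb2_brack_dual i j :
  emb2 (brack_dual c i j) = \sum_l c l i j *: 'X_(rshift n l).
Proof.
rewrite /brack_dual (raddfN (@emb2 R n)) (raddf_sum (@emb2 R n)) -sumrN /=.
apply: eq_bigr => l _; by rewrite linearZ /= emb2X c_anti scaleNr opprK.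
Qed.

Lemma red2_Q1Q2n : red2 c (Q1Q2n R n) = cross_form killing.
Proof.
rewrite red2_sum.
under eq_bigr => ij _ do
  rewrite red2_pure scale1r /= !mulr1 !ad_derX emb1_brack_dual emb2_brack_dual
          mulr_sumZ.
rewrite exchange_big_scale /cross_form; apply: eq_bigr => l _; apply: eq_bigr => m _.
by rewrite killingE exchange_big pair_bigA.
Qed.

Lemma red2_Finv2 a b : red2 c (Finv2 c a b) = 24%:R^-1 *: cross_form killing.
Proof.
rewrite /Finv2 !(red2_add, red2_scale).
rewrite !(red2_eq0 (all_vanishes_mulr _ (all_vanishes_Q1 c))).
rewrite !(red2_eq0 (all_vanishes_mulr _ (all_vanishes_Q2 c))).
rewrite (red2_eq0 (all_vanishes_Q1Q2R c)) red2_Q1Q2n red2_Kterm.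
rewrite !scaler0 !add0r scalerN -{1}(scale1r (cross_form _)) -scalerBl scalerA.
by congr (_ *: _); ring.
Qed.

End KillingForm.

Lemma coef_mul3_low (K : comNzRingType) (p q r : {poly K}) :
  p`_0 = 1 -> p`_1 = 0 -> q`_0 = 1 -> q`_1 = 0 -> r`_0 = 1 -> r`_1 = 0 ->
  [/\ (p * q * r)`_0 = 1, (p * q * r)`_1 = 0 &
      (p * q * r)`_2 = p`_2 + q`_2 + r`_2].
Proof.
move=> p0 p1 q0 q1 r0 r1.
rewrite !coefM !big_ord_recr !big_ord0 /= !coefM !big_ord_recr !big_ord0 /=.
by rewrite p0 p1 q0 q1 r0 r1; split; ring.
Qed.

Lemma coef_map_low (A B : nzRingType) (f : {rmorphism A -> B})
    (p : {poly A}) (x : A) :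
  p`_0 = 1 -> p`_1 = 0 -> p`_2 = x ->
  [/\ (map_poly f p)`_0 = 1, (map_poly f p)`_1 = 0 & (map_poly f p)`_2 = f x].
Proof. by move=> p0 p1 p2; rewrite !coef_map p0 p1 p2 /= rmorph0 rmorph1. Qed.

Section GammaSeries.
Variables (R : fieldType) (n : nat) (c : 'I_n -> 'I_n -> 'I_n -> R).

Lemma texp3_coef (X : {poly {mpoly R[n]}}) : X`_0 = 0 -> X`_1 = 0 ->
  [/\ (texp 3 X)`_0 = 1, (texp 3 X)`_1 = 0 & (texp 3 X)`_2 = X`_2].
Proof.
move=> X0 X1.
have sqX_low i : (i < 3)%N -> (X ^+ 2)`_i = 0.
  rewrite expr2 coefM; case: i => [|[|[|]]] // _;
  by rewrite !big_ord_recr big_ord0 /= X0 ?X1 !(mul0r, mulr0, addr0, add0r).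
rewrite /texp !big_ord_recr big_ord0 /= add0r expr0 expr1 !coefD !coefZ !coef1.
rewrite !sqX_low // X0 X1 (_ : 0`! = 1)%N // (_ : 1`! = 1)%N // invr1.
by split; rewrite /= !(mul1r, mulr0, addr0, add0r).
Qed.

Lemma gexp3_coef : [/\ (gexp c 3)`_0 = 0, (gexp c 3)`_1 = 0 &
                       (gexp c 3)`_2 = alpha R 1 *: Tr c 1].
Proof.
rewrite /gexp big_ltn // big_nat1.
(* Abstracted so that [/=] below does not unfold [alpha] and [Tr]. *)
move: (alpha R 1 *: Tr c 1) (alpha R 2 *: Tr c 2) => A B.
by rewrite !coefD !coefCM !coefXn /= !(mulr0, mulr1, addr0).
Qed.

Lemma rhs3_coef :
  [/\ (rhs c 3)`_0 = 1, (rhs c 3)`_1 = 0 &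
      (rhs c 3)`_2 =
        alpha R 1 *: (coprod (Tr c 1) - emb1 (Tr c 1) - emb2 (Tr c 1))].
Proof.
have [g0 g1 g2] := gexp3_coef.
have [e0 e1 e2] := texp3_coef g0 g1; rewrite -/(gamma c 3) g2 in e0 e1 e2.
have [f0 f1 f2] : [/\ (gamma_inv c 3)`_0 = 1, (gamma_inv c 3)`_1 = 0 &
                      (gamma_inv c 3)`_2 = - (alpha R 1 *: Tr c 1)].
  by rewrite -g2 -coefN; apply: texp3_coef; rewrite coefN ?g0 ?g1 oppr0.
have [P0 P1 P2] := coef_map_low (@coprod R n) e0 e1 e2.
have [Q0 Q1 Q2] := coef_map_low (@emb1 R n) f0 f1 f2.
have [S0 S1 S2] := coef_map_low (@emb2 R n) f0 f1 f2.
have [r0 r1 r2] := coef_mul3_low P0 P1 Q0 Q1 S0 S1.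
rewrite /rhs r0 r1 r2 P2 Q2 S2; split=> //.
by rewrite /= (raddfN (@emb1 R n)) (raddfN (@emb2 R n)) !scalerBr -!linearZ.
Qed.

Lemma alpha1 : alpha R 1 = 2%:R^-1 * 24%:R^-1.
Proof.
rewrite /alpha big_nat1 /useries big_nat1 expr1 coefZ coefXn eqxx mulr1.
rewrite (_ : 4 ^ 1 * (2 * 1).+1`! = 24)%N //.
by rewrite expr2 mulrNN mulr1 divr1 mul1r.
Qed.

End GammaSeries.

Theorem proposition5p5p1 (R : fieldType) (charR0 : [pchar R] =i pred0)
  (n : nat) (c : 'I_n -> 'I_n -> 'I_n -> R) (hc : is_lie_bracket c)
  (a b : R) (hab : a - b = - (2%:R)^-1) :
  forall k : nat, (k < 3)%N ->
    red2 c (Finv_coef c a b k) = (rhs c 3)`_k.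
Proof.
have [rhs0 rhs1 rhs2] := rhs3_coef c.
case=> [|[|[|//]]] _ /=.
- by rewrite rhs0 red2_one.
- by rewrite rhs1 red2_Finv1.
rewrite rhs2 (red2_Finv2 hc.1) Tr1_polarization alpha1 scalerA mulrAC.
by rewrite mulVf ?mul1r // (pcharf0P R).1.
Qed.
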